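(* Let $B_k$ ($k\ge2$) be a generalized Bethe tree with parameters $n_1,\dots,n_k$ and $d_1,\dots,d_k$, let $\alpha\in[0,1)$ and $\beta=1-\alpha$. Let $T_k$ be the $k\times k$ symmetric tridiagonal matrix with diagonal entries $\alpha,\ \alpha d_2,\ \dots,\ \alpha d_k$, with $(s-1,s)$ and $(s,s-1)$ entries $\beta\sqrt{d_s-1}$ for $s=2,\dots,k-1$, and with $(k-1,k)$ and $(k,k-1)$ entries $\beta\sqrt{d_k}$; let $T_j$ be its $j\times j$ leading principal submatrix ($j=1,\dots,k$). Then: (1) as a multiset, the spectrum of $A_\alpha(B_k)$ is obtained by taking each eigenvalue of $T_j$ with multiplicity $n_j-n_{j+1}$ for $1\le j\le k-1$, and each eigenvalue of $T_k$ with multiplicity $1$, and forming the multiset union (multiplicities of equal eigenvalues arising from different $T_j$ being added); (2) the largest eigenvalue of $T_k$ equals the largest eigenvalue of $A_\alpha(B_k)$.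
   Context: For a graph $G$, $A(G)$ is the adjacency matrix, $D(G)$ the diagonal degree matrix, and $A_\alpha(G)=\alpha D(G)+(1-\alpha)A(G)$. In a rooted tree, the level of a vertex is its distance to the root plus one. A generalized Bethe tree $B_k$ is a rooted tree with $k$ levels in which all vertices at the same level have the same degree. For $j\in\{1,\dots,k\}$, $n_{k-j+1}$ denotes the number of vertices at level $j$ and $d_{k-j+1}$ their common degree (so index $1$ refers to the deepest level and index $k$ to the root; $d_1=1$, $n_k=1$). *)

(* Real numbers are modelled by an arbitrary real closed
   field R : rcfType (needed for square roots Num.sqrt). *)
From HB Require Import structures.
From mathcomp Require Import all_boot all_order all_algebra.
Set Implicit Arguments. Unset Strict Implicit. Unset Printing Implicit Defensive.
Import Order.TTheory GRing.Theory Num.Theory.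
Local Open Scope ring_scope.

(* A rooted tree with root r is encoded by a parent map p : p r = r and every
   vertex reaches r by iterating p.  The (simple, undirected) graph is the one
   whose edges are the pairs {x, p x}, x <> r. *)
Definition is_rooted_tree (N : nat) (p : 'I_N -> 'I_N) (r : 'I_N) : Prop :=
  p r = r /\ forall x : 'I_N, exists m : nat, iter m p x = r.

Definition tadj (N : nat) (p : 'I_N -> 'I_N) (x y : 'I_N) : bool :=
  (x != y) && ((p x == y) || (p y == x)).

Definition tdeg (N : nat) (p : 'I_N -> 'I_N) (x : 'I_N) : nat :=
  #|[set y | tadj p x y]|.

(* distance to the root = least m with p^m(x) = r (such an m is < N in a
   rooted tree).  The level of x (as in the paper) is tdepth x + 1. *)
Definition tdepth (N : nat) (p : 'I_N -> 'I_N) (r x : 'I_N) : nat :=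
  find (fun m => iter m p x == r) (iota 0 N).

Definition adjmx (R : nzRingType) (N : nat) (p : 'I_N -> 'I_N) : 'M[R]_N :=
  \matrix_(i, j) (tadj p i j)%:R.

Definition degmx (R : nzRingType) (N : nat) (p : 'I_N -> 'I_N) : 'M[R]_N :=
  \matrix_(i, j) ((i == j)%:R * (tdeg p i)%:R).

Definition Aalpha (R : nzRingType) (N : nat) (p : 'I_N -> 'I_N) (alpha : R)
  : 'M[R]_N := alpha *: degmx R p + (1 - alpha) *: adjmx R p.

(* Entries of the k x k tridiagonal matrix T_k, with 0-based indices a b.
   In 1-based indices: diagonal (1,1) = alpha, (s,s) = alpha d_s for s >= 2;
   (s-1,s),(s,s-1) = beta sqrt(d_s - 1) for 2 <= s <= k-1;
   (k-1,k),(k,k-1) = beta sqrt(d_k); other entries 0. *)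
Definition Tentry (R : rcfType) (k : nat) (d : nat -> nat) (alpha : R)
  (a b : nat) : R :=
  let beta := 1 - alpha in
  if a == b then (if a == 0%N then alpha else alpha * (d a.+1)%:R)
  else if (a == b.+1) || (b == a.+1) then
    let s := (maxn a b).+1 in
    beta * Num.sqrt (if s == k then (d k)%:R else (d s)%:R - 1)
  else 0.

Definition Tsub (R : rcfType) (k : nat) (d : nat -> nat) (alpha : R) (j : nat)
  : 'M[R]_j := \matrix_(a < j, b < j) Tentry k d alpha a b.

(* For large x, the matrix x - A_alpha(B_k) has an LDL^T factorization along the
   tree (L unipotent, each vertex eliminated after its children) whose pivots
   depend only on the level: writing c_s for the number of children of a vertex
   of level index s, they are rho_s(x) = x - alpha d_s - c_s beta^2 / rho_(s-1)(x).
   The off-diagonal entries of T_k are beta sqrt(c_s), so the same recursion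
   yields the pivots of x - T_j, and
     det (x - T_j) = rho_1 ... rho_j,
     det (x - A_alpha) = prod_v rho_(level v)
                       = prod_(1<=j<k) (rho_1 ... rho_j)^(n_j - n_(j+1)) * rho_1 ... rho_k.
   Agreement on a half-line makes this a polynomial identity, which gives the
   multiplicities.  The characteristic polynomials of the T_j satisfy a three-term
   recurrence with positive coefficients c_j beta^2, so at the largest root of
   chi_j the polynomial chi_(j+1) is negative: the largest root of chi_k lies
   beyond every root of every chi_j, hence beyond every eigenvalue of A_alpha. *)

From mathcomp Require Import all_boot all_order all_algebra perm.
From mathcomp Require Import ring lra zify.
From Stdlib Require Import Classical.
Set Implicit Arguments. Unset Strict Implicit. Unset Printing Implicit Defensive.
Import Order.TTheory GRing.Theory Num.Theory.
Local Open Scope ring_scope.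

Lemma poly_eq_halfline (R : numDomainType) (p q : {poly R}) (C : R) :
  (forall x, C <= x -> p.[x] = q.[x]) -> p = q.
Proof.
move=> eq_pq; apply/eqP; rewrite -subr_eq0; apply/eqP.
apply: (@roots_geq_poly_eq0 _ _ [seq C + i%:R | i <- iota 0 (size (p - q))]).
- apply/allP => _ /mapP [i _ ->].
  by rewrite /root !hornerE eq_pq ?subrr // lerDl ler0n.
- by rewrite map_inj_uniq ?iota_uniq // => i j /addrI /eqP; rewrite eqr_nat => /eqP.
- by rewrite size_map size_iota.
Qed.

Lemma horner_char_poly (R : comNzRingType) n (A : 'M[R]_n) x :
  (char_poly A).[x] = \det (x%:M - A).
Proof.
rewrite /char_poly -horner_evalE -det_map_mx; congr (\det _).
apply/matrixP => i j; rewrite !mxE rmorphB rmorphMn /= !horner_evalE hornerX.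
by rewrite hornerC.
Qed.

Lemma mupX (F : fieldType) (x : F) (q : {poly F}) e :
  q != 0 -> mup x (q ^+ e) = (e * mup x q)%N.
Proof.
move=> q0; elim: e => [|e IHe]; first by rewrite expr0 mupNroot // root1.
by rewrite exprS mupM ?expf_neq0 // IHe mulSn.
Qed.

Lemma mup_prod (F : fieldType) (x : F) (I : Type) (s : seq I) (Q : I -> {poly F}) :
  (forall i, Q i != 0) -> mup x (\prod_(i <- s) Q i) = (\sum_(i <- s) mup x (Q i))%N.
Proof.
move=> Q0; elim: s => [|i s IHs]; first by rewrite !big_nil mupNroot // root1.
have prod_neq0 : \prod_(j <- s) Q j != 0.
  by apply: (big_ind (fun q => q != 0)); [exact: oner_neq0 | exact: mulf_neq0 |].
by rewrite !big_cons mupM // IHs.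
Qed.

Lemma poly_gt0_or_largest_root (R : rcfType) (q : {poly R}) (C : R) :
  q != 0 -> (forall x, C <= x -> 0 < q.[x]) ->
  (forall x, 0 < q.[x]) \/ exists2 l, root q l & forall x, l < x -> 0 < q.[x].
Proof.
have [s] := ubnP (size q); elim: s q C => // s IHs q C /ltnSE size_q q0 q_gt0.
have [[c root_c]|no_root] := classic (exists c, root q c); last first.
  left=> x; rewrite ltNge; apply/negP => qx_le0.
  have [y _ root_y] : exists2 y, x <= y <= Num.max x C & root q y.
    apply: poly_ivt; rewrite ?le_max ?lexx // qx_le0 ltW // q_gt0 //.
    by rewrite le_max lexx orbT.
  by apply: no_root; exists y.
have [q' def_q] := factor_theorem _ _ root_c.
have q'0 : q' != 0 by apply: contraNneq q0 => q'_eq0; rewrite def_q q'_eq0 mul0r.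
have size_q' : (size q' < s)%N.
  by move: size_q; rewrite def_q size_Mmonic ?monicXsubC // size_XsubC addn2.
have q'_gt0 x : Num.max C (c + 1) <= x -> 0 < q'.[x].
  rewrite ge_max => /andP [Cx cx]; have := q_gt0 x Cx.
  rewrite def_q hornerM hornerXsubC pmulr_lgt0 // subr_gt0.
  by apply: lt_le_trans cx; rewrite ltrDl ltr01.
have root_qc : root q c by rewrite def_q rootM root_XsubC eqxx orbT.
right; have [q'_gt0_all | [l root_l l_max]] := IHs q' _ size_q' q'0 q'_gt0.
  exists c => // x cx.
  by rewrite def_q hornerM hornerXsubC mulr_gt0 // subr_gt0.
exists (Num.max c l).
  by have [_|] := leP c l; rewrite // def_q rootM root_l.
move=> x; rewrite gt_max => /andP [cx lx].
by rewrite def_q hornerM hornerXsubC mulr_gt0 ?l_max // subr_gt0.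
Qed.

Section ThreeTermRecurrence.
Variables (R : rcfType) (q : nat -> {poly R}) (a b : nat -> R) (m : nat) (C : R).
Hypotheses (q0 : q 0%N = 1) (q1 : q 1%N = 'X - (a 1%N)%:P).
Hypothesis qSS : forall j, (j.+2 <= m)%N ->
  q j.+2 = ('X - (a j.+2)%:P) * q j.+1 - (b j.+2)%:P * q j.
Hypothesis b_gt0 : forall j, (j.+2 <= m)%N -> 0 < b j.+2.
Hypothesis q_gt0_large : forall j, (j <= m)%N -> forall x, C <= x -> 0 < (q j).[x].

(* At the largest root of [q j] all earlier [q i] are positive, so the recurrence
   makes [q j.+1] negative there; its own largest root therefore lies further right. *)
Lemma three_term_largest_root_le j : (1 <= j <= m)%N ->
  exists2 l, root (q j) l &
    (forall x, l < x -> forall i, (i <= j)%N -> 0 < (q i).[x]) /\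
    (forall i, (i < j)%N -> 0 < (q i).[l]).
Proof.
elim: j => [|[|j] IHj] /andP [_ jm] //.
  exists (a 1%N); first by rewrite q1 root_XsubC.
  split; last by case=> // _; rewrite q0 hornerC ltr01.
  move=> x ax [|[|i]] // _; first by rewrite q0 hornerC ltr01.
  by rewrite q1 hornerXsubC subr_gt0.
have [l root_l [l_max l_prev]] := IHj (ltnW jm).
have qSS_l_lt0 : (q j.+2).[l] < 0.
  rewrite qSS // hornerD hornerN !hornerM hornerC (eqP root_l) mulr0 sub0r.
  by rewrite oppr_lt0 mulr_gt0 ?b_gt0 ?l_prev.
have qSS_neq0 : q j.+2 != 0.
  by apply: contraTneq qSS_l_lt0 => ->; rewrite horner0 ltxx.
have [qSS_gt0 | [l' root_l' l'_max]] :=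
  poly_gt0_or_largest_root qSS_neq0 (q_gt0_large jm).
  by have := qSS_gt0 l; rewrite ltNge ltW.
have ll' : l < l'.
  rewrite ltNge le_eqVlt; apply/negP => /orP [/eqP l'l | /l'_max].
    by move: qSS_l_lt0; rewrite -l'l (eqP root_l') ltxx.
  by rewrite ltNge ltW.
exists l' => //; split; last by move=> i ij; apply: l_max.
move=> x l'x i; rewrite leq_eqVlt => /predU1P [-> | ij]; first exact: l'_max.
by apply: l_max; [exact: lt_trans l'x | exact: ij].
Qed.

Lemma three_term_largest_root : (1 <= m)%N ->
  exists2 l, root (q m) l & forall x, l < x -> forall j, (j <= m)%N -> 0 < (q j).[x].
Proof.
move=> m_ge1; have [|l root_l [l_max _]] := @three_term_largest_root_le m.
  by rewrite m_ge1 leqnn.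
by exists l.
Qed.

End ThreeTermRecurrence.

(* Every nonidentity permutation has a moved point [j] maximizing [f] among moved
   points; the factor [K j (s j)] then vanishes since [f (s j) <= f j]. *)
Lemma det_unipotent_graded (R : comNzRingType) n (K : 'M[R]_n) (f : 'I_n -> nat) :
  (forall i j, K i j != 0 -> (f i < f j)%N) -> \det (1%:M + K) = 1.
Proof.
move=> K_graded; have Kii i : K i i = 0.
  by apply/eqP; apply: contraT => /K_graded; rewrite ltnn.
rewrite /determinant (bigD1 (1 : 'S_n)%g) //= [X in _ + X]big1.
  rewrite addr0 odd_perm1 expr0 mul1r; apply: big1 => i _.
  by rewrite perm1 !mxE eqxx Kii addr0.
move=> s s_neq1; have [i si | s_fix] := pickP (fun i => s i != i); last first.
  by case/eqP: s_neq1; apply/permP => i; rewrite perm1; apply/eqP/negbFE/s_fix.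
have [j sj j_max] := @arg_maxnP _ i (fun j => s j != j) f si.
rewrite (bigD1 j) //= !mxE eq_sym (negbTE sj) mulr0n add0r.
suff -> : K j (s j) = 0 by rewrite mul0r mulr0.
apply/eqP; apply: contraT => /K_graded f_lt.
have /j_max : s (s j) != s j by rewrite (inj_eq perm_inj).
by rewrite /= leqNgt f_lt.
Qed.

(* [c v a] reads "[a] is a child of [v]" in a forest graded by [f]. *)
Section ForestPattern.
Variables (F : fieldType) (n : nat) (c : rel 'I_n) (f : 'I_n -> nat).
Variables (e rho : 'I_n -> F) (M : 'M[F]_n).
Hypothesis c_graded : forall v a, c v a -> (f v < f a)%N.
Hypothesis c_parent_uniq : forall v w a, c v a -> c w a -> v = w.
Hypothesis rho_neq0 : forall v, rho v != 0.
Hypothesis M_offdiag : forall v w, v != w -> M v w = (c v w)%:R * e w + (c w v)%:R * e v.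
Hypothesis M_diag : forall v, M v v = rho v + \sum_(a | c v a) e a ^+ 2 / rho a.

Let L : 'M[F]_n := 1%:M + \matrix_(v, a) ((c v a)%:R * (e a / rho a)).

Lemma forest_pattern_LDLt : M = L *m diag_mx (\row_v rho v) *m L^T.
Proof.
have cvv v : c v v = false by apply/negP => /c_graded; rewrite ltnn.
rewrite /L raddfD /= trmx1 !mulmxDl !mulmxDr !mul1mx !mulmx1 mul_mx_diag mul_diag_mx.
apply/matrixP => v w; rewrite !mxE; under eq_bigr => a _ do rewrite !mxE.
have [<- | vw] := eqVneq v w.
  rewrite M_diag cvv !mul0r mulr0 !addr0 mulr1n add0r; congr (_ + _).
  rewrite big_mkcond /=; apply: eq_bigr => a _.
  by case: (c v a); rewrite ?mul0r // !mul1r; field.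
rewrite mulr0n add0r M_offdiag // [X in _ = _ + (_ + X)]big1 ?addr0; last first.
  move=> a _; case cva: (c v a); case cwa: (c w a); rewrite ?mul0r ?mulr0 //.
  by case/eqP: vw; apply: c_parent_uniq cva cwa.
move: (rho_neq0 v) (rho_neq0 w); set cvw := (c v w)%:R; set cwv := (c w v)%:R.
by move=> rv rw; field; rewrite rv rw.
Qed.

Lemma det_forest_pattern : \det M = \prod_v rho v.
Proof.
have det_L : \det L = 1.
  apply: (@det_unipotent_graded _ _ _ f) => v a; rewrite mxE.
  by case cva: (c v a); rewrite ?mul0r ?eqxx // => _; apply: c_graded.
rewrite forest_pattern_LDLt !det_mulmx det_tr det_L det_diag mul1r mulr1.
by apply: eq_bigr => v _; rewrite mxE.
Qed.

End ForestPattern.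

Section RootedTree.
Variables (N : nat) (p : 'I_N -> 'I_N) (r : 'I_N).
Hypothesis tree : is_rooted_tree p r.
Local Notation depth := (tdepth p r).

Lemma tdepth_spec x :
  iter (depth x) p x = r /\ forall m, iter m p x = r -> (depth x <= m)%N.
Proof.
have [_ reach] := tree; have [m0 iter_m0] := reach x.
have x_r : fconnect p x r by rewrite -iter_m0 fconnect_iter.
have findex_lt : (findex p x r < N)%N.
  apply: leq_trans (findex_max x_r) _.
  rewrite -size_orbit -(card_uniqP (orbit_uniq p x)).
  by rewrite -[X in (_ <= X)%N]card_ord max_card.
have has_r : has (fun m => iter m p x == r) (iota 0 N).
  by apply/hasP; exists (findex p x r); rewrite ?mem_iota ?iter_findex ?eqxx.
have depth_lt : (depth x < N)%N.
  by rewrite /tdepth -[X in (_ < X)%N](size_iota 0 N) -has_find.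
split; first by have := nth_find 0 has_r; rewrite nth_iota // => /eqP.
move=> m iter_m; rewrite leqNgt; apply/negP => m_lt.
by have := before_find 0 m_lt; rewrite nth_iota ?iter_m ?eqxx // (ltn_trans m_lt).
Qed.

Lemma tdepth_eq0 x : (depth x == 0%N) = (x == r).
Proof.
have [iter_x min_x] := tdepth_spec x.
apply/eqP/eqP => [x0 | x_r]; first by rewrite x0 in iter_x.
by apply/eqP; rewrite -leqn0 min_x // x_r.
Qed.

Lemma parent_fixed_root x : p x = x -> x = r.
Proof.
have [<- _] := tdepth_spec x => px.
by elim: (depth x) => //= m <-; rewrite px.
Qed.

Lemma tdepth_parent x : x != r -> depth x = (depth (p x)).+1.
Proof.
rewrite -tdepth_eq0; have [iter_x min_x] := tdepth_spec x.
have [iter_px min_px] := tdepth_spec (p x).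
case def_d: (depth x) => [|d] // _.
apply/eqP; rewrite eqn_leq !ltnS andbC min_px /=; last by rewrite -iterSr -def_d.
by rewrite -ltnS -def_d min_x // iterSr.
Qed.

Lemma tdepth_iter x m : (m <= depth x)%N -> depth (iter m p x) = (depth x - m)%N.
Proof.
elim: m => [|m IHm] m_le; first by rewrite subn0.
have depth_m : depth (iter m p x) = (depth x - m)%N by rewrite IHm // ltnW.
have x_m_r : iter m p x != r by rewrite -tdepth_eq0 depth_m subn_eq0 -ltnNge.
by have := tdepth_parent x_m_r; rewrite -iterS depth_m; lia.
Qed.

Definition tchild (v a : 'I_N) := (a != v) && (p a == v).

Lemma tdepth_child v a : tchild v a -> depth a = (depth v).+1.
Proof.
case/andP => av /eqP pa; have [pr _] := tree.
have a_r : a != r by apply: contraNneq av => ar; rewrite -pa ar pr.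
by rewrite tdepth_parent // pa.
Qed.

Lemma tchild_parent_uniq v w a : tchild v a -> tchild w a -> v = w.
Proof. by case/andP => _ /eqP <- /andP [_ /eqP]. Qed.

Lemma tchild_asym v w : tchild v w -> ~~ tchild w v.
Proof. by move/tdepth_child => dw; apply/negP => /tdepth_child; rewrite dw; lia. Qed.

Lemma tadj_tchild v w : tadj p v w = tchild w v || tchild v w.
Proof. by rewrite /tadj /tchild eq_sym andb_orr. Qed.

Lemma tdeg_tchild v : tdeg p v = (#|[set a | tchild v a]| + (v != r))%N.
Proof.
have [pr _] := tree; rewrite /tdeg.
have -> : [set y | tadj p v y] = [set a | tchild v a] :|: [set y | tchild y v].
  by apply/setP => y; rewrite !inE tadj_tchild orbC.
rewrite cardsU; set I := _ :&: _.
have -> : I = set0.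
  by apply/setP => y; rewrite !inE; apply/negP => /andP [/tchild_asym/negP].
rewrite cards0 subn0; congr (_ + _)%N.
have [-> | v_r] := eqVneq v r.
  by apply/eqP; rewrite cards_eq0; apply/eqP/setP => y; rewrite !inE /tchild pr andNb.
rewrite /= -(cards1 (p v)); apply: eq_card => y; rewrite !inE /tchild eq_sym.
have [<- | ] := eqVneq (p v) y; last by rewrite andbF.
by rewrite andbT; apply: contraNneq v_r => /parent_fixed_root ->.
Qed.

End RootedTree.

Section Pivots.
Variables (R : rcfType) (k : nat) (d : nat -> nat) (alpha : R).

(* Number of children of a vertex whose level has index [s] (the root has [d k]). *)
Definition branching (s : nat) : R := if s == k then (d k)%:R else (d s)%:R - 1.

(* Pivots of the LDL^T elimination of [x - T_k], from the leaves up. *)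
Fixpoint pivot (x : R) (j : nat) : R :=
  if j is j'.+1 then
    x - alpha * (d j)%:R - branching j * (1 - alpha) ^+ 2 / pivot x j'
  else 1.

Definition pivot_bound : R := 1 + 2 * (\sum_(s < k.+1) d s)%:R.

Lemma pivot_ge1 x : 0 <= alpha <= 1 -> pivot_bound <= x ->
  forall j, (j <= k)%N -> 1 <= pivot x j.
Proof.
move=> /andP [alpha_ge0 alpha_le1]; rewrite /pivot_bound.
set D := (\sum_(s < k.+1) d s)%:R => x_large.
have d_le s : (s <= k)%N -> (d s)%:R <= D.
  by move=> s_le; rewrite ler_nat (bigD1 (Ordinal (s_le : (s < k.+1)%N))) ?leq_addr.
have D_ge0 : 0 <= D by rewrite ler0n.
elim=> [|j IHj] j_lt /=; first exact: lexx.
have pivot_j := IHj (ltnW j_lt); have dj := d_le _ j_lt.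
have branching_le : branching j.+1 <= D.
  by rewrite /branching; case: eqP => _; [exact: d_le | lra].
have ratio_ge0 : 0 <= (1 - alpha) ^+ 2 / pivot x j.
  by rewrite divr_ge0 ?sqr_ge0 // (le_trans ler01).
have ratio_le1 : (1 - alpha) ^+ 2 / pivot x j <= 1.
  rewrite ler_pdivrMr ?mul1r ?(lt_le_trans ltr01) //.
  by apply: le_trans pivot_j; nra.
have : alpha * (d j.+1)%:R <= D by nra.
(* both subtracted terms are at most [D], and [x >= 1 + 2 D] *)
rewrite -mulrA; nra.
Qed.

Lemma pivot_neq0 x : 0 <= alpha <= 1 -> pivot_bound <= x ->
  forall j, (j <= k)%N -> pivot x j != 0.
Proof.
move=> alpha01 x_large j j_le; rewrite gt_eqF //.
exact: lt_le_trans ltr01 (pivot_ge1 alpha01 x_large j_le).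
Qed.

Hypotheses (k_ge2 : (2 <= k)%N) (d1 : d 1%N = 1%N).
Hypothesis branching_ge0 : forall s, (1 <= s <= k)%N -> 0 <= branching s.

(* Row [a] of [T_j] plays the child of row [a.+1]; row 0 is the deepest level. *)
Lemma det_Tsub x j : (j <= k)%N -> (forall i, (1 <= i <= j)%N -> pivot x i != 0) ->
  \det (x%:M - Tsub k d alpha j) = \prod_(i < j) pivot x i.+1.
Proof.
move=> j_le pivot_nz.
apply: (@det_forest_pattern _ _ (fun v a : 'I_j => a.+1 == v :> nat)
   (fun a => j - a)%N (fun a => - ((1 - alpha) * Num.sqrt (branching a.+2)))).
- by move=> v a /eqP av; have := ltn_ord v; lia.
- by move=> v w a /eqP av /eqP aw; apply: val_inj; rewrite /= -av -aw.
- by move=> v; apply: pivot_nz; have := ltn_ord v; lia.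
- move=> v w vw; rewrite !mxE (negbTE vw) mulr0n sub0r /Tentry.
  rewrite (negbTE (vw : v != w :> nat)) ![(v == w.+1 :> nat)]eq_sym.
  rewrite ![(w == v.+1 :> nat)]eq_sym.
  have [wv | wv] := eqVneq (w.+1 : nat) v; have [vw' | vw'] := eqVneq (v.+1 : nat) w.
  + by lia.
  + by rewrite /= (_ : (maxn v w).+1 = w.+2) 1?mul1r ?mul0r ?addr0 //; lia.
  + by rewrite /= (_ : (maxn v w).+1 = v.+2) 1?mul1r ?mul0r ?add0r //; lia.
  + by rewrite /= !mul0r addr0 oppr0.
- case=> [[|v] v_lt]; rewrite !mxE eqxx mulr1n /Tentry eqxx /=.
    rewrite big_pred0 // addr0 /branching (_ : (1 == k)%N = false); last by lia.
    by rewrite d1 subrr !mul0r subr0 mulr1.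
  have v_lt' : (v < j)%N by lia.
  rewrite (big_pred1 (Ordinal v_lt')) /=; last by move=> a; rewrite /= eqSS.
  rewrite sqrrN exprMn sqr_sqrtr; last by apply: branching_ge0; lia.
  by rewrite /=; ring.
Qed.

End Pivots.

Arguments branching {R} k d s.
Arguments pivot_bound {R} k d.

(* Multiplicative Abel summation: with [P j = rho 1 * ... * rho j], the product
   [rho 1 ^+ n 1 * ... * rho m ^+ n m] regroups as
   [P 1 ^+ (n 1 - n 2) * ... * P (m - 1) ^+ (n (m - 1) - n m) * P m ^+ n m]. *)
Lemma prod_by_levels (R : comNzRingType) (I : finType) (lv : I -> nat)
    (rho : nat -> R) (n : nat -> nat) (k : nat) :
  (1 <= k)%N -> (forall v, (1 <= lv v <= k)%N) ->
  (forall m, (1 <= m <= k)%N -> #|[set v | lv v == m]| = n m) ->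
  (forall m, (1 <= m < k)%N -> (n m.+1 <= n m)%N) -> n k = 1%N ->
  \prod_v rho (lv v) =
  \prod_(1 <= j < k) (\prod_(i < j) rho i.+1) ^+ (n j - n j.+1) * \prod_(i < k) rho i.+1.
Proof.
move=> k_ge1 lv_range n_card n_le n_k.
have level m : (1 <= m <= k)%N -> \prod_(v | lv v == m) rho (lv v) = rho m ^+ n m.
  move=> m_range; rewrite (eq_bigr (fun _ => rho m)); last by move=> v /eqP ->.
  rewrite (eq_bigl [in [set v | lv v == m]]); last by move=> v; rewrite inE.
  by rewrite prodr_const n_card.
have below m : (1 <= m <= k)%N -> \prod_(v | (lv v <= m)%N) rho (lv v) =
    \prod_(1 <= j < m) (\prod_(i < j) rho i.+1) ^+ (n j - n j.+1) *
    (\prod_(i < m) rho i.+1) ^+ n m.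
  elim: m => [|[|m] IHm] /andP [_ m_le] //.
    rewrite big_geq // mul1r big_ord1 -level //.
    by apply: eq_bigl => v /=; have := lv_range v; lia.
  rewrite (bigID (fun v => (lv v <= m.+1)%N)) /=.
  rewrite (eq_bigl (fun v => (lv v <= m.+1)%N)); last first.
    by move=> v; apply/andb_idl => /leqW.
  rewrite [X in _ * X](eq_bigl (fun v => lv v == m.+2)); last first.
    by move=> v; rewrite -ltnNge eqn_leq.
  rewrite IHm ?level ?(ltnW m_le) //.
  rewrite [in RHS]big_nat_recr //= [X in _ = _ * X ^+ _]big_ord_recr /=.
  rewrite exprMn -!mulrA; congr (_ * _).
  by rewrite mulrA -exprD subnK ?n_le.
rewrite -[X in _ = _ * X]expr1 -[X in _ = _ * _ ^+ X]n_k -below ?k_ge1 ?leqnn //.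
by apply: eq_bigl => v; have := lv_range v; lia.
Qed.

Section BetheTree.
Variables (R : rcfType) (N k : nat) (p : 'I_N -> 'I_N) (r : 'I_N).
Variables (n d : nat -> nat) (alpha : R).
Hypotheses (k_ge2 : (2 <= k)%N) (tree : is_rooted_tree p r).
Hypothesis depth_lt : forall x, (tdepth p r x < k)%N.
Hypothesis deepest : exists x, tdepth p r x = k.-1.
Hypothesis n_level :
  forall i, (1 <= i <= k)%N -> n i = #|[set x | tdepth p r x == (k - i)%N]|.
Hypothesis deg_level : forall x, tdeg p x = d (k - tdepth p r x)%N.
Hypothesis alpha01 : 0 <= alpha < 1.

Local Notation depth := (tdepth p r).
Local Notation children v := [set a | tchild p v a].

Lemma exists_tdepth t : (t < k)%N -> exists z, depth z = t.
Proof.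
have [y depth_y] := deepest => t_lt.
by exists (iter (k.-1 - t) p y); rewrite tdepth_iter // depth_y; lia.
Qed.

Lemma card_children v : (#|children v| + (depth v != 0%N))%N = d (k - depth v).
Proof. by rewrite -deg_level (tdeg_tchild tree) tdepth_eq0. Qed.

Lemma branching_card_children v : #|children v|%:R = branching k d (k - depth v) :> R.
Proof.
move: (card_children v); rewrite /branching.
have [-> | depth_v] := eqVneq (depth v) 0%N; first by rewrite subn0 eqxx addn0 => <-.
rewrite ifF => [<- | ]; first by rewrite natrD addrK.
by apply/negbTE; have := depth_lt v; lia.
Qed.

Lemma has_child v : (depth v < k.-1)%N -> (0 < #|children v|)%N.
Proof.
move=> depth_v; have [z depth_z] := exists_tdepth (t := (depth v).+1) ltac:(lia).
have z_r : z != r by rewrite -(tdepth_eq0 tree) depth_z.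
have depth_pz : depth (p z) = depth v by have := tdepth_parent tree z_r; rewrite depth_z => -[].
have := card_children v; rewrite -depth_pz -card_children => /addIn ->.
apply/card_gt0P; exists z; rewrite inE /tchild eqxx andbT.
by apply: contra_neq z_r => /esym /(parent_fixed_root tree).
Qed.

Lemma d_leaf : d 1%N = 1%N.
Proof.
have [y depth_y] := deepest.
have no_child : #|children y| = 0%N.
  apply: eq_card0 => a; rewrite !inE; apply/negP => /(tdepth_child tree).
  by have := depth_lt a; rewrite depth_y; lia.
have := card_children y; rewrite no_child depth_y (_ : (k - k.-1 = 1)%N); last by lia.
by move=> <-; lia.
Qed.

Lemma branching_ge0 s : (1 <= s <= k)%N -> 0 <= branching k d s :> R.
Proof.
move=> s_range; have [z depth_z] := exists_tdepth (t := (k - s)%N) ltac:(lia).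
by rewrite -(_ : k - depth z = s)%N -?branching_card_children ?ler0n // depth_z; lia.
Qed.

Lemma branching_gt0 s : (2 <= s <= k)%N -> 0 < branching k d s :> R.
Proof.
move=> s_range; have [z depth_z] := exists_tdepth (t := (k - s)%N) ltac:(lia).
rewrite -(_ : k - depth z = s)%N -?branching_card_children ?ltr0n ?has_child //.
  by rewrite depth_z; lia.
by rewrite depth_z; lia.
Qed.

Lemma n_nonincreasing m : (1 <= m < k)%N -> (n m.+1 <= n m)%N.
Proof.
move=> m_range; rewrite !n_level; try lia.
apply: leq_trans (leq_imset_card p [set v | depth v == (k - m)%N]).
apply/subset_leq_card/subsetP => v; rewrite inE => /eqP depth_v.
have /card_gt0P [a] : (0 < #|children v|)%N by apply: has_child; lia.
rewrite inE => a_child; apply/imsetP; exists a; last by case/andP: a_child => _ /eqP.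
by rewrite inE (tdepth_child tree a_child) depth_v; apply/eqP; lia.
Qed.

Lemma n_root : n k = 1%N.
Proof.
rewrite n_level ?subnn ?leqnn ?(leq_trans _ k_ge2) // -(cards1 r).
by apply: eq_card => v; rewrite !inE (tdepth_eq0 tree).
Qed.

Lemma alpha_le1 : 0 <= alpha <= 1.
Proof. by case/andP: alpha01 => -> /ltW. Qed.

Lemma det_Aalpha x : pivot_bound k d <= x ->
  \det (x%:M - Aalpha p alpha) = \prod_v pivot k d alpha x (k - depth v).
Proof.
move=> x_large; pose rho v := pivot k d alpha x (k - depth v).
apply: (@det_forest_pattern _ _ (tchild p) depth (fun _ => - (1 - alpha)) rho).
- by move=> v a /(tdepth_child tree) ->.
- exact: tchild_parent_uniq.
- by move=> v; apply: pivot_neq0 => //; [exact: alpha_le1 | exact: leq_subr].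
- move=> v w vw; rewrite !mxE (negbTE vw) mulr0n sub0r mul0r mulr0 add0r tadj_tchild.
  case cwv: (tchild p w v); case cvw: (tchild p v w) => /=;
    rewrite ?(mulr1, mul1r, mul0r, mulr0, add0r, addr0, oppr0) //.
  by move: (tchild_asym tree cvw); rewrite cwv.
- move=> v; rewrite !mxE eqxx mulr1n mul1r /tadj eqxx /= mulr0 addr0 /rho.
  under eq_bigr => a /(tdepth_child tree) -> do rewrite sqrrN.
  rewrite (eq_bigl (fun a => a \in children v)); last by move=> a; rewrite inE.
  rewrite sumr_const -[_ *+ #|_|]mulr_natl branching_card_children deg_level.
  rewrite (_ : k - depth v = (k - (depth v).+1).+1)%N; last first.
    by have := depth_lt v; lia.
  by rewrite /=; ring.
Qed.

Local Notation chi j := (char_poly (Tsub k d alpha j)).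

Lemma char_Tsub_neq0 j : chi j != 0.
Proof. exact/monic_neq0/char_poly_monic. Qed.

Lemma horner_char_Tsub x j : pivot_bound k d <= x -> (j <= k)%N ->
  (chi j).[x] = \prod_(i < j) pivot k d alpha x i.+1.
Proof.
move=> x_large j_le; rewrite horner_char_poly (det_Tsub k_ge2 d_leaf branching_ge0) //.
by move=> i /andP [_ i_le]; apply: pivot_neq0 alpha_le1 x_large _ (leq_trans i_le j_le).
Qed.

Lemma char_Aalpha_factor :
  char_poly (Aalpha p alpha) = \prod_(1 <= j < k) chi j ^+ (n j - n j.+1) * chi k.
Proof.
apply: (@poly_eq_halfline _ _ _ (pivot_bound k d)) => x x_large.
rewrite horner_char_poly det_Aalpha // hornerM horner_prod horner_char_Tsub //.
under eq_big_nat => j /andP [_ j_lt] do rewrite horner_exp horner_char_Tsub ?(ltnW j_lt) //.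
apply: (@prod_by_levels _ _ (fun v => k - depth v)%N) => [|v|m m_range||].
- exact: ltnW.
- by have := depth_lt v; lia.
- rewrite n_level //; apply: eq_card => v; rewrite !inE.
  by have := depth_lt v; lia.
- exact: n_nonincreasing.
- exact: n_root.
Qed.

Lemma mup_char_Aalpha x : mup x (char_poly (Aalpha p alpha)) =
  (\sum_(1 <= j < k) (n j - n j.+1) * mup x (chi j) + mup x (chi k))%N.
Proof.
have := monic_neq0 (char_poly_monic (Aalpha p alpha)).
rewrite char_Aalpha_factor mulf_eq0 negb_or => /andP [prod_neq0 chi_k_neq0].
rewrite mupM // mup_prod => [|j]; last by rewrite expf_neq0 ?char_Tsub_neq0.
by congr (_ + _)%N; apply: eq_bigr => j _; rewrite mupX ?char_Tsub_neq0.
Qed.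

Lemma char_Tsub0 : chi 0%N = 1.
Proof. by rewrite /char_poly det_mx00. Qed.

Lemma char_Tsub1 : chi 1%N = 'X - (alpha * (d 1%N)%:R)%:P.
Proof.
apply: (@poly_eq_halfline _ _ _ (pivot_bound k d)) => x x_large.
rewrite horner_char_Tsub ?(ltnW k_ge2) // big_ord1 hornerXsubC /=.
by rewrite /branching ifF ?d_leaf ?subrr ?mul0r ?subr0 //; apply/negbTE; lia.
Qed.

Lemma char_TsubSS j : (j.+2 <= k)%N ->
  chi j.+2 = ('X - (alpha * (d j.+2)%:R)%:P) * chi j.+1
             - (branching k d j.+2 * (1 - alpha) ^+ 2)%:P * chi j.
Proof.
move=> j_lt; apply: (@poly_eq_halfline _ _ _ (pivot_bound k d)) => x x_large.
rewrite hornerD hornerN !hornerM hornerXsubC hornerC !horner_char_Tsub //; try lia.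
rewrite !big_ord_recr /= -/(pivot k d alpha x j.+1).
have := pivot_neq0 alpha_le1 x_large (j := j.+1) ltac:(lia).
set pivot_j := pivot k d alpha x j.+1; set P := \prod_(i < j) _.
by move=> pivot_j_neq0; field.
Qed.

Lemma char_Tsub_gt0 j : (j <= k)%N -> forall x, pivot_bound k d <= x -> 0 < (chi j).[x].
Proof.
move=> j_le x x_large; rewrite horner_char_Tsub //; apply: prodr_gt0 => i _.
apply: lt_le_trans ltr01 (pivot_ge1 alpha_le1 x_large _).
by have := ltn_ord i; lia.
Qed.

Lemma char_Tsub_largest_root :
  exists2 l, root (chi k) l & forall j mu, (j <= k)%N -> root (chi j) mu -> mu <= l.
Proof.
have [|l root_l l_max] := @three_term_largest_root _ (fun j => chi j)
  (fun j => alpha * (d j)%:R) (fun j => branching k d j * (1 - alpha) ^+ 2) k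
  (pivot_bound k d) char_Tsub0 char_Tsub1 char_TsubSS _ char_Tsub_gt0 (ltnW k_ge2).
  move=> j j_lt; have [_ alpha_lt1] := andP alpha01.
  by rewrite mulr_gt0 ?exprn_gt0 ?subr_gt0 // branching_gt0 //; lia.
exists l => // j mu j_le root_mu; rewrite leNgt; apply/negP => l_mu.
by have := l_max mu l_mu j j_le; rewrite (eqP root_mu) ltxx.
Qed.

Lemma root_char_Aalpha mu : root (char_poly (Aalpha p alpha)) mu ->
  exists2 j, (j <= k)%N & root (chi j) mu.
Proof.
rewrite char_Aalpha_factor rootM => /orP [|root_k]; last by exists k.
rewrite /root horner_prod prodf_seq_eq0 => /hasP [j].
rewrite mem_index_iota horner_exp expf_eq0 => /andP [_ j_lt] /and3P [_ _ root_j].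
by exists j; first exact: ltnW.
Qed.

Lemma root_char_Aalpha_Tsub mu :
  root (chi k) mu -> root (char_poly (Aalpha p alpha)) mu.
Proof. by rewrite char_Aalpha_factor rootM => ->; rewrite orbT. Qed.

Lemma largest_root_char_Aalpha : exists l, [/\ root (chi k) l,
  root (char_poly (Aalpha p alpha)) l,
  forall mu, root (chi k) mu -> mu <= l &
  forall mu, root (char_poly (Aalpha p alpha)) mu -> mu <= l].
Proof.
have [l root_l l_max] := char_Tsub_largest_root.
exists l; split=> [||mu|mu]; first exact: root_l.
- exact: root_char_Aalpha_Tsub.
- exact: l_max.
- by case/root_char_Aalpha => j; apply: l_max.
Qed.

End BetheTree.

Theorem theorem6 (R : rcfType) (N k : nat) (p : 'I_N -> 'I_N) (r : 'I_N)
    (n d : nat -> nat) (alpha : R) :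
  (2 <= k)%N ->
  is_rooted_tree p r ->
  (* exactly k levels *)
  (forall x, (tdepth p r x < k)%N) ->
  (exists x, tdepth p r x = k.-1) ->
  (* n_{k-j+1} = number of vertices at level j, i.e. at depth j-1 *)
  (forall i, (1 <= i <= k)%N -> n i = #|[set x | tdepth p r x == (k - i)%N]|) ->
  (* all vertices at the same level have the same degree, d_{k-j+1} *)
  (forall x, tdeg p x = d (k - tdepth p r x)%N) ->
  0 <= alpha < 1 ->
  (forall x : R,
     mup x (char_poly (Aalpha p alpha)) =
       (\sum_(1 <= j < k) (n j - n j.+1) * mup x (char_poly (Tsub k d alpha j))
        + mup x (char_poly (Tsub k d alpha k)))%N)
  /\
  (exists lam : R,
     eigenvalue (Tsub k d alpha k) lam /\ eigenvalue (Aalpha p alpha) lam /\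
     (forall mu, eigenvalue (Tsub k d alpha k) mu -> mu <= lam) /\
     (forall mu, eigenvalue (Aalpha p alpha) mu -> mu <= lam)).
Proof.
move=> k_ge2 tree depth_lt deepest n_level deg_level alpha01.
split=> [x | ].
  exact: (mup_char_Aalpha k_ge2 tree depth_lt deepest n_level deg_level alpha01).
have [l [root_Tk root_A Tk_max A_max]] :=
  largest_root_char_Aalpha k_ge2 tree depth_lt deepest n_level deg_level alpha01.
exists l; rewrite !eigenvalue_root_char; split=> //; split=> //.
by split=> mu; rewrite eigenvalue_root_char; [exact: Tk_max | exact: A_max].
Qed.
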